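(* Let $L$ be a finite-dimensional semisimple Leibniz algebra over $\mathbb{C}$ with a decomposition $L=(\oplus_{i=1}^m\mathfrak{g}_i)\ltimes(\oplus_{k=1}^n I_k)$, where $\mathfrak{g}_1,\dots,\mathfrak{g}_m$ are simple Lie subalgebras whose direct sum is a subalgebra complementary to $I$, and $I=\oplus_{k=1}^n I_k$ is a decomposition into simple $(\oplus_{i=1}^m\mathfrak{g}_i)$-submodules. Let $\mathrm{B}\Gamma$ be the bipartite graph with vertex classes $\{I_1,\dots,I_n\}$ and $\{\mathfrak{g}_1,\dots,\mathfrak{g}_m\}$, where $I_k$ and $\mathfrak{g}_i$ are joined by an edge if and only if $[I_k,\mathfrak{g}_i]=I_k$. Then $L$ is indecomposable if and only if $\mathrm{B}\Gamma$ is connected.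
   Context: A Leibniz algebra is a vector space $L$ with a bilinear bracket satisfying $[[x,y],z]=[[x,z],y]+[x,[y,z]]$. The subspace $I=\mathrm{Span}\langle [x,x]\mid x\in L\rangle$ is an ideal with $[L,I]=0$, $\mathfrak{g}_L=L/I$ is a Lie algebra, and $L$ is semisimple if $\mathfrak{g}_L$ is semisimple; then $L$ has a subalgebra isomorphic to $\mathfrak{g}_L$ complementary to $I$, and $I$ is a module over it via the right bracket $i.g=[i,g]$. For each $k,i$ one has $[I_k,\mathfrak{g}_i]\in\{I_k,\{0\}\}$. An algebra is indecomposable if it is not a direct sum $A_1\oplus A_2$ of two proper (nonzero) ideals. *)

From HB Require Import structures.
From mathcomp Require Import all_boot all_order all_algebra complex.
From mathcomp Require Import Rstruct.

Set Implicit Arguments.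
Unset Strict Implicit.
Unset Printing Implicit Defensive.

Import GRing.Theory.
Local Open Scope ring_scope.

Definition Cfield : fieldType := Rdefinitions.R[i].

Section LeibnizDefs.
Variables (V : vectType Cfield) (br : V -> V -> V).

Definition bilinear_br : Prop :=
  (forall (a : Cfield) (x y z : V), br (a *: x + y) z = a *: br x z + br y z) /\
  (forall (a : Cfield) (x y z : V), br z (a *: x + y) = a *: br z x + br z y).

Definition leibniz_identity : Prop :=
  forall x y z : V, br (br x y) z = br (br x z) y + br x (br y z).

(* [A,B] = Span <[a,b] | a in A, b in B> (by bilinearity it suffices to
   take a, b ranging over bases of A and B). *)
Definition brsp (A B : {vspace V}) : {vspace V} :=
  <<[seq br a b | a <- vbasis A, b <- vbasis B]>>%VS.

Definition is_square_span (I : {vspace V}) : Prop :=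
  (forall x : V, br x x \in I) /\
  (forall U : {vspace V}, (forall x : V, br x x \in U) -> (I <= U)%VS).

Definition subalgebra (A : {vspace V}) : Prop :=
  forall x y, x \in A -> y \in A -> br x y \in A.

Definition ideal (A : {vspace V}) : Prop :=
  forall x y, y \in A -> (br x y \in A) && (br y x \in A).

Definition ideal_in (g A : {vspace V}) : Prop :=
  (A <= g)%VS /\ forall x y, x \in g -> y \in A -> (br x y \in A) && (br y x \in A).

(* g is a simple Lie subalgebra: a subalgebra on which the bracket is a Lie
   bracket ([x,x] = 0, which together with the Leibniz identity gives
   anticommutativity and the Jacobi identity), non-abelian, whose only ideals
   are 0 and g. *)
Definition simple_Lie_subalgebra (g : {vspace V}) : Prop :=
  [/\ subalgebra g,
      (forall x, x \in g -> br x x = 0),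
      (exists x y, [/\ x \in g, y \in g & br x y != 0])
    & forall A, ideal_in g A -> A = 0%VS \/ A = g].

(* M is a submodule of the S-module I (I a module over S via m.s = [m,s]) *)
Definition right_submodule (S M : {vspace V}) : Prop :=
  forall x y, x \in M -> y \in S -> br x y \in M.

Definition simple_right_module (S M : {vspace V}) : Prop :=
  [/\ M != 0%VS, right_submodule S M
    & forall U : {vspace V}, (U <= M)%VS -> right_submodule S U ->
        U = 0%VS \/ U = M].

Definition indecomposable : Prop :=
  ~ exists A1 A2 : {vspace V},
      [/\ ideal A1 /\ ideal A2, A1 != 0%VS, A2 != 0%VS,
          directv (A1 + A2) & (A1 + A2)%VS = fullv].

Definition BGamma_edge (m n : nat) (g : 'I_m -> {vspace V})
  (Ik : 'I_n -> {vspace V}) : rel ('I_n + 'I_m)%type :=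
  fun u v =>
    match u, v with
    | inl k, inr i => brsp (Ik k) (g i) == Ik k
    | inr i, inl k => brsp (Ik k) (g i) == Ik k
    | _, _ => false
    end.

Definition graph_connected (T : finType) (e : rel T) : Prop :=
  forall x y : T, connect e x y.

End LeibnizDefs.

From HB Require Import structures.
From mathcomp Require Import all_boot all_order all_algebra complex.
From mathcomp Require Import Rstruct.

(* Call the g_i and the I_k the pieces of L; they are the vertices of BGamma
   and L is their direct sum.  Since [L, I] = 0, every piece is a right ideal,
   and [I_k, g_i] is a submodule of the simple module I_k, hence 0 or I_k.
   So the only nonzero brackets between distinct pieces are the [I_k, g_i]
   along edges, and the sum of the pieces of a union of connected components
   is an ideal: a disconnected graph splits L.  Conversely, if L = A + B with
   A, B ideals meeting in 0, each simple g_i lies in A or in B, and an edge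
   I_k -- g_i forces I_k = [I_k, g_i] into the summand containing g_i; along a
   connected graph everything lands in one summand. *)

Set Implicit Arguments.
Unset Strict Implicit.
Unset Printing Implicit Defensive.

Import GRing.Theory.
Local Open Scope ring_scope.

(* The bilinearity proof is a dummy argument: it is what allows declaring
   [left_br Hb x] and [right_br Hb y] as linear maps below. *)
Definition left_br (V : vectType Cfield) (br : V -> V -> V) of bilinear_br br :=
  fun x y => br x y.

Definition right_br (V : vectType Cfield) (br : V -> V -> V) of bilinear_br br :=
  fun y x => br x y.

Lemma left_br_linear (V : vectType Cfield) (br : V -> V -> V) (Hb : bilinear_br br) x :
  linear (left_br Hb x).
Proof. by move=> a u v; apply: (proj2 Hb). Qed.

Lemma right_br_linear (V : vectType Cfield) (br : V -> V -> V) (Hb : bilinear_br br) y :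
  linear (right_br Hb y).
Proof. by move=> a u v; apply: (proj1 Hb). Qed.

HB.instance Definition _ (V : vectType Cfield) (br : V -> V -> V) Hb x :=
  GRing.isLinear.Build Cfield V V *:%R (@left_br V br Hb x) (left_br_linear Hb x).

HB.instance Definition _ (V : vectType Cfield) (br : V -> V -> V) Hb y :=
  GRing.isLinear.Build Cfield V V *:%R (@right_br V br Hb y) (right_br_linear Hb y).

Section Bilinear.
Variables (V : vectType Cfield) (br : V -> V -> V).
Hypothesis br_bilinear : bilinear_br br.

Local Notation brl x := (linfun (left_br br_bilinear x)).
Local Notation brr y := (linfun (right_br br_bilinear y)).

Lemma brlE x y : brl x y = br x y. Proof. by rewrite lfunE. Qed.
Lemma brrE y x : brr y x = br x y. Proof. by rewrite lfunE. Qed.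

Lemma br0l y : br 0 y = 0.
Proof. exact: raddf0 (right_br br_bilinear y). Qed.
Lemma br_addr x y z : br x (y + z) = br x y + br x z.
Proof. exact: (raddfD (left_br br_bilinear x) y z). Qed.

Lemma br_suml (J : Type) (r : seq J) (P : pred J) (F : J -> V) y :
  br (\sum_(j <- r | P j) F j) y = \sum_(j <- r | P j) br (F j) y.
Proof. exact: (raddf_sum (right_br br_bilinear y) r P F). Qed.

Lemma br_sumr (J : Type) (r : seq J) (P : pred J) (F : J -> V) x :
  br x (\sum_(j <- r | P j) F j) = \sum_(j <- r | P j) br x (F j).
Proof. exact: (raddf_sum (left_br br_bilinear x) r P F). Qed.

Lemma br_scalel a x y : br (a *: x) y = a *: br x y.
Proof. exact: (linearZ_LR (right_br br_bilinear y) a x). Qed.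

Lemma br_scaler a x y : br x (a *: y) = a *: br x y.
Proof. exact: (linearZ_LR (left_br br_bilinear x) a y). Qed.

Lemma br_sum_meml (J : finType) (P : pred J) (A : J -> {vspace V}) x y
    (S : {vspace V}) :
  (forall j a, P j -> a \in A j -> br a y \in S) ->
  x \in (\sum_(j | P j) A j)%VS -> br x y \in S.
Proof.
move=> brA /memv_sumP[a aA ->]; rewrite br_suml.
by apply: rpred_sum => j Pj; exact: (brA _ _ Pj (aA j Pj)).
Qed.

Lemma br_sum_memr (J : finType) (P : pred J) (B : J -> {vspace V}) x y
    (S : {vspace V}) :
  (forall j b, P j -> b \in B j -> br x b \in S) ->
  y \in (\sum_(j | P j) B j)%VS -> br x y \in S.
Proof.
move=> brB /memv_sumP[b bB ->]; rewrite br_sumr.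
by apply: rpred_sum => j Pj; exact: (brB _ _ Pj (bB j Pj)).
Qed.

Lemma brsp_mem (A B : {vspace V}) a b : a \in A -> b \in B -> br a b \in brsp br A B.
Proof.
move=> /coord_vbasis -> /coord_vbasis ->; rewrite br_suml; apply: rpred_sum => i _.
rewrite br_scalel br_sumr; apply/rpredZ/rpred_sum => j _; rewrite br_scaler.
by apply/rpredZ/memv_span/allpairs_f; apply: mem_nth; rewrite size_tuple.
Qed.

Lemma brsp_sub (A B S : {vspace V}) :
  (forall a b, a \in A -> b \in B -> br a b \in S) -> (brsp br A B <= S)%VS.
Proof.
move=> brAB; apply/span_subvP => _ /allpairsP[[a b] [/= aA bB ->]].
by apply: brAB; apply: vbasis_mem.
Qed.

Lemma ideal_in_capv (g C : {vspace V}) :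
  subalgebra br g -> ideal br C -> ideal_in br g (g :&: C).
Proof.
move=> g_sub idC; split=> [|x y xg /memv_capP[yg yC]]; first exact: capvSl.
by case/andP: (idC x y yC) => xyC yxC; rewrite !memv_cap xyC yxC !g_sub.
Qed.

Lemma simple_sub_ideal_summand (g B B' : {vspace V}) :
  simple_Lie_subalgebra br g -> (forall x y, x \in g -> br x y \in g) ->
  ideal br B -> ideal br B' -> (B + B')%VS = fullv -> (g <= B)%VS \/ (g <= B')%VS.
Proof.
case=> g_sub _ [a [b [ag bg ab_neq0]]] g_min g_right idB idB' BB'_full.
have g_cap C : ideal br C -> (g :&: C)%VS = 0%VS \/ (g <= C)%VS.
  move=> idC; case: (g_min _ (ideal_in_capv g_sub idC)) => [|gC]; first by left.
  by right; rewrite -gC capvSr.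
have br_a_eq0 C c : ideal br C -> (g :&: C)%VS = 0%VS -> c \in C -> br a c = 0.
  move=> idC gC0 cC; apply/eqP; rewrite -memv0 -gC0 memv_cap g_right //.
  by case/andP: (idC a c cC).
case: (g_cap B idB) => [gB0|]; last by left.
case: (g_cap B' idB') => [gB'0|]; last by right.
have: b \in (B + B')%VS by rewrite BB'_full memvf.
case/memv_addP => b1 b1B [b2 b2B' b_eq]; move: ab_neq0.
by rewrite b_eq br_addr (br_a_eq0 B) ?(br_a_eq0 B') ?addr0 ?eqxx.
Qed.

Section Leibniz.
Hypothesis leibniz : leibniz_identity br.

Lemma br_square_span_eq0 (I : {vspace V}) x z :
  is_square_span br I -> z \in I -> br x z = 0.
Proof.
move=> [_ I_min] zI; have: (I <= lker (brl x))%VS.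
  apply: I_min => y; rewrite memv_ker brlE.
  (* The Leibniz identity with z = y says [x,[y,y]] = 0. *)
  by have := leibniz x y y; rewrite -{1}[br (br x y) y]addr0 => /addrI <-.
by move/subvP/(_ z zI); rewrite memv_ker brlE => /eqP.
Qed.

Lemma brsp_right_submodule (S A B : {vspace V}) :
  right_submodule br S A -> right_submodule br S B -> right_submodule br S (brsp br A B).
Proof.
move=> A_mod B_mod x y xAB yS.
have: (brsp br A B <= brr y @^-1: brsp br A B)%VS.
  apply/span_subvP => _ /allpairsP[[a b] [/= /vbasis_mem aA /vbasis_mem bB ->]].
  by rewrite -memv_preim brrE leibniz rpredD // brsp_mem // ?A_mod ?B_mod.
by move/subvP/(_ x xAB); rewrite -memv_preim brrE.
Qed.

Section Decomposition.
Variables (I : {vspace V}) (m n : nat).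
Variables (g : 'I_m -> {vspace V}) (Ik : 'I_n -> {vspace V}).
Hypothesis I_squares : is_square_span br I.
Hypothesis g_simple : forall i, simple_Lie_subalgebra br (g i).
Hypothesis g_commute :
  forall i j, i != j -> forall x y, x \in g i -> y \in g j -> br x y = 0.
Hypotheses (GI_direct : directv ((\sum_(i < m) g i) + I))
  (GI_full : ((\sum_(i < m) g i) + I)%VS = fullv).
Hypotheses (Ik_direct : directv (\sum_(k < n) Ik k))
  (Ik_sum : (\sum_(k < n) Ik k)%VS = I).
Hypothesis Ik_simple : forall k, simple_right_module br (\sum_(i < m) g i)%VS (Ik k).

Local Notation edge := (BGamma_edge br g Ik).

Definition piece (v : 'I_n + 'I_m) : {vspace V} :=
  match v with inl k => Ik k | inr i => g i end.

Lemma sum_pieces : (\sum_v piece v)%VS = fullv.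
Proof. by rewrite big_sumType /= addvC Ik_sum GI_full. Qed.

Lemma memv_pieces x : x \in (\sum_v piece v)%VS.
Proof. by rewrite sum_pieces memvf. Qed.

Lemma dim_sum_pieces : (\sum_v \dim (piece v))%N = \dim (fullv : {vspace V}).
Proof.
(* [directv (\sum_i g i + I)] also asserts that the sum of the g i is direct. *)
rewrite big_sumType /= -GI_full (directvP GI_direct) /= -Ik_sum (directvP Ik_direct) /=.
by rewrite addnC.
Qed.

Lemma br_Ik_eq0 x k z : z \in Ik k -> br x z = 0.
Proof.
move=> zk; apply: br_square_span_eq0 I_squares _ => //.
by rewrite -Ik_sum; apply: (subvP (sumv_sup k isT (subvv _))).
Qed.

Lemma piece_right_ideal u x y : x \in piece u -> br x y \in piece u.
Proof.
move=> xu; apply: (br_sum_memr _ (memv_pieces y)) => -[k|j] z _ /= zv.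
  by rewrite (br_Ik_eq0 _ zv) rpred0.
case: u xu => [k|i] /= xu.
  case: (Ik_simple k) => _ + _; apply=> //.
  exact: (subvP (sumv_sup j isT (subvv _))).
case: (eqVneq i j) zv => [<- | ij] zv; last by rewrite (g_commute ij xu zv) rpred0.
by case: (g_simple i) => + _ _ _; apply.
Qed.

Lemma g_right_ideal i x y : x \in g i -> br x y \in g i.
Proof. exact: (@piece_right_ideal (inr i)). Qed.

Lemma brsp_Ik_g_cases k i : brsp br (Ik k) (g i) = 0%VS \/ brsp br (Ik k) (g i) = Ik k.
Proof.
have [_ Ik_mod Ik_min] := Ik_simple k; apply: Ik_min.
  apply: brsp_sub => a b ak bi; apply: Ik_mod => //.
  exact: (subvP (sumv_sup i isT (subvv _))).
by apply: brsp_right_submodule => // x y xi _; apply: g_right_ideal.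
Qed.

Lemma br_Ik_g_eq0 k i x y :
  ~~ edge (inl k) (inr i) -> x \in Ik k -> y \in g i -> br x y = 0.
Proof.
rewrite /= => no_edge xk yi.
case: (brsp_Ik_g_cases k i) => [brsp0|brspk]; last by rewrite brspk eqxx in no_edge.
by apply/eqP; rewrite -memv0 -brsp0 brsp_mem.
Qed.

Lemma br_pieces_eq0 u w x y :
  x \in piece u -> y \in piece w -> u != w -> ~~ edge u w -> br x y = 0.
Proof.
case: u w => [k|i] [k'|j] /= xu yw uw no_edge; try exact: br_Ik_eq0 yw.
  exact: br_Ik_g_eq0 no_edge xu yw.
by apply: g_commute xu yw; apply: contraNneq uw => ->.
Qed.

Lemma edge_sym : symmetric edge.
Proof. by case=> ? []. Qed.

Lemma piece_neq0 v : piece v != 0%VS.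
Proof.
case: v => [k|i] /=; first by case: (Ik_simple k).
have [_ _ [x [y [xi _ xy]]] _] := g_simple i; apply: contraNneq xy => gi0.
by move: xi; rewrite gi0 memv0 => /eqP->; rewrite br0l.
Qed.

Definition pieces (D : {pred 'I_n + 'I_m}) : {vspace V} :=
  (\sum_(v in D) piece v)%VS.

Lemma piece_sub_pieces D v : v \in D -> (piece v <= pieces D)%VS.
Proof. by move=> Dv; apply: sumv_sup Dv (subvv _). Qed.

Lemma pieces_neq0 D v : v \in D -> pieces D != 0%VS.
Proof.
by move=> Dv; apply: contraNneq (piece_neq0 v) => D0; rewrite -subv0 -D0 piece_sub_pieces.
Qed.

Lemma pieces_ideal D : closed edge D -> ideal br (pieces D).
Proof.
move=> D_closed x y yD; apply/andP; split; last first.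
  apply: (br_sum_meml _ yD) => v y' Dv y'v.
  exact: subvP (piece_sub_pieces Dv) _ (piece_right_ideal _ y'v).
apply: (br_sum_meml _ (memv_pieces x)) => u x' _ x'u.
apply: (br_sum_memr _ yD) => w y' Dw y'w.
have [Du|nDu] := boolP (u \in D).
  exact: subvP (piece_sub_pieces Du) _ (piece_right_ideal _ x'u).
rewrite (br_pieces_eq0 x'u y'w) ?rpred0 //; first by apply: contraNneq nDu => ->.
by apply: contraNN nDu => /D_closed ->.
Qed.

Lemma pieces_addC D : (pieces D + pieces [predC D])%VS = fullv.
Proof. by rewrite -sum_pieces (bigID (fun v => v \in D)). Qed.

Lemma dim_pieces_addC D :
  (\dim (pieces D) + \dim (pieces [predC D]) <= \dim (fullv : {vspace V}))%N.
Proof.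
rewrite -dim_sum_pieces (bigID (fun v => v \in D)) /=.
by apply: leq_add; apply: dimv_leq_sum.
Qed.

Lemma indecomposable_connected : indecomposable br -> graph_connected edge.
Proof.
move=> indec u w; apply/idPn => no_uw; apply: indec.
have D_closed := connect_closed (sym_connect_sym edge_sym) u.
exists (pieces (connect edge u)), (pieces [predC connect edge u]).
split; [|exact: pieces_neq0 (connect0 edge u)| | |exact: pieces_addC].
  by split; apply: pieces_ideal; last apply: predC_closed.
  by apply: (pieces_neq0 (v := w)); rewrite inE.
by rewrite directvEgeq /= pieces_addC dim_pieces_addC.
Qed.

Section Summands.
Variables B B' : {vspace V}.
Hypotheses (B_ideal : ideal br B) (B'_ideal : ideal br B').
Hypotheses (BB'_full : (B + B')%VS = fullv) (BB'_cap : (B :&: B')%VS = 0%VS).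

Lemma piece_sub_along_edge u w : edge u w -> (piece u <= B)%VS -> (piece w <= B)%VS.
Proof.
have Ik_sub C k i : ideal br C -> edge (inl k) (inr i) -> (g i <= C)%VS -> (Ik k <= C)%VS.
  move=> C_ideal /eqP <- giC; apply: brsp_sub => a b _ bi.
  by case/andP: (C_ideal a b (subvP giC b bi)).
case: u w => [k|i] [k'|j] //= e_uw uB; last exact: Ik_sub B_ideal e_uw uB.
have [//|gB'] :=
  simple_sub_ideal_summand (g_simple j) (@g_right_ideal j) B_ideal B'_ideal BB'_full.
have: (Ik k <= B :&: B')%VS by rewrite subv_cap uB (Ik_sub _ _ _ B'_ideal e_uw gB').
by rewrite BB'_cap subv0 (negPf (piece_neq0 (inl k))).
Qed.

Lemma connected_summand_eq0 v :
  graph_connected edge -> (piece v <= B)%VS -> B' = 0%VS.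
Proof.
move=> conn vB.
have B_closed : closed edge [pred w | (piece w <= B)%VS].
  apply: (intro_closed (sym_connect_sym edge_sym)) => u w e_uw; rewrite !inE.
  exact: piece_sub_along_edge.
have all_B w : (piece w <= B)%VS.
  by move: (closed_connect B_closed (conn v w)); rewrite !inE vB => <-.
apply/eqP; rewrite -subv0 -BB'_cap subv_cap subvv andbT.
by apply: subv_trans (subvf B') _; rewrite -sum_pieces; apply/subv_sumP => w _.
Qed.

Lemma exists_piece_in_summand :
  graph_connected edge -> B != 0%VS ->
  exists v, (piece v <= B)%VS \/ (piece v <= B')%VS.
Proof.
move=> conn B_neq0; have [m0|m_pos] := posnP m; last first.
  exists (inr (Ordinal m_pos)).
  exact: simple_sub_ideal_summand (@g_right_ideal _) B_ideal B'_ideal BB'_full.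
have no_g (i : 'I_m) : False by case: i => i; rewrite m0.
have [n0|n_pos] := posnP n.
  have no_Ik (k : 'I_n) : False by case: k => k; rewrite n0.
  have L0 : (\sum_v piece v)%VS = 0%VS.
    by apply: big1 => -[k|i] _; [case: (no_Ik k) | case: (no_g i)].
  by move: B_neq0; rewrite -subv0 -L0 sum_pieces subvf.
(* With m = 0 the graph has no edges, so it is the single vertex I_k0 = L. *)
pose k0 := Ordinal n_pos; exists (inl k0); left.
have single (v : 'I_n + 'I_m) : v = inl k0.
  case: v => [k|i]; last by case: (no_g i).
  have /connectP[[|w p] /=] := conn (inl k) (inl k0); first by move=> _ [->].
  by case: w => [k'|i] //=; case: (no_g i).
have L_k0 : fullv = Ik k0.
  by rewrite -sum_pieces (big_pred1 (inl k0)) // => v; rewrite (single v) /= eqxx.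
have [_ _ Ik_min] := Ik_simple k0.
have B_sub : (B <= Ik k0)%VS by rewrite -L_k0 subvf.
have B_mod : right_submodule br (\sum_(i < m) g i) B.
  by move=> x y xB _; case/andP: (B_ideal y xB).
by case: (Ik_min B B_sub B_mod) => [B0|->//]; rewrite B0 eqxx in B_neq0.
Qed.

End Summands.

Lemma connected_indecomposable : graph_connected edge -> indecomposable br.
Proof.
move=> conn [A1 [A2 [[A1_ideal A2_ideal] A1_neq0 A2_neq0 /directv_addP A_cap A_full]]].
have [v [vA1|vA2]] := exists_piece_in_summand A1_ideal A2_ideal A_full conn A1_neq0.
  move/eqP: A2_neq0; apply.
  exact: (connected_summand_eq0 A1_ideal A2_ideal A_full A_cap conn vA1).
rewrite capvC in A_cap; rewrite addvC in A_full.
move/eqP: A1_neq0; apply.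
exact: (connected_summand_eq0 A2_ideal A1_ideal A_full A_cap conn vA2).
Qed.

End Decomposition.

End Leibniz.

End Bilinear.

Theorem theorem3p5 (V : vectType Cfield) (br : V -> V -> V)
  (I : {vspace V}) (m n : nat)
  (g : 'I_m -> {vspace V}) (Ik : 'I_n -> {vspace V}) :
  bilinear_br br ->
  leibniz_identity br ->
  is_square_span br I ->
  (forall i, simple_Lie_subalgebra br (g i)) ->
  (forall i j, i != j -> forall x y, x \in g i -> y \in g j -> br x y = 0) ->
  directv (\sum_(i < m) g i) ->
  subalgebra br (\sum_(i < m) g i)%VS ->
  directv ((\sum_(i < m) g i) + I) ->
  ((\sum_(i < m) g i) + I)%VS = fullv ->
  directv (\sum_(k < n) Ik k) ->
  (\sum_(k < n) Ik k)%VS = I ->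
  (forall k, simple_right_module br (\sum_(i < m) g i)%VS (Ik k)) ->
  (indecomposable br <-> graph_connected (BGamma_edge br g Ik)).
Proof.
(* The two ignored hypotheses follow from the others: the directness of the sum
   of the g i is part of [directv (\sum_i g i + I)], and the g i commute. *)
move=> Hb Hl Hsq Hsimp Hgg _ _ HdGI Hfull HdI HIsum Hmod; split.
  exact: (indecomposable_connected Hb Hl Hsq Hsimp Hgg HdGI Hfull HdI HIsum Hmod).
exact: (connected_indecomposable Hb Hl Hsq Hsimp Hgg Hfull HIsum Hmod).
Qed.
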